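(* Let $K=\{x\in[0,1]^n: g_\ell(x)\ge 0,\ \ell=1,\dots,m\}$ with affine $g_\ell$, $V=[n]$, $t>1$, $y\in\mathrm{La}^t(K)$, $k<t$ a positive integer and $S\subseteq V$ such that $y_I=0$ for every $I\in\mathcal P_{2t}(V)$ with $|I\cap S|\ge k$. Let $y'$ be the extension of $y$ (so $y'_I=y_I$ if $|I|\le 2t$ and $y'_I=0$ otherwise), and for $X\subseteq S$ let $z^X_I=\sum_{J:\,X\subseteq J\subseteq S}(-1)^{|J\setminus X|}y'_{I\cup J}$. Then for every $X\subseteq S$: (1) $z^X_\emptyset\ge 0$; (2) if $z^X_\emptyset=0$ then $z^X_I=0$ for every $I\subseteq V$ with $|I|\le 2t-2k$.
   Context: Notation: $\mathcal P_t(U)$ is the set of subsets of $U$ of size at most $t$. For a collection $\mathcal T$ of subsets and a vector $y$ indexed by subsets, $M_{\mathcal T}(y)$ is the symmetric matrix indexed by $\mathcal T$ with $(I,J)$-entry $y_{I\cup J}$. For an affine $g(x)=b+\sum_{j}a_jx_j$, $(g*y)_I=b\,y_I+\sum_j a_j y_{I\cup\{j\}}$. The $t$-th Lasserre lifted polytope $\mathrm{La}^t(K)$ of $K=\{x\in[0,1]^n:g_\ell(x)\ge0,\ \ell=1,\dots,m\}$ is the set of $y\in[0,1]^{\mathcal P_{2t}(V)}$ with $y_\emptyset=1$, $M_{\mathcal P_t(V)}(y)\succeq0$, and $M_{\mathcal P_{t-1}(V)}(g_\ell*y)\succeq0$ for all $\ell$. *)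

From HB Require Import structures.
From mathcomp Require Import all_boot all_order all_algebra.
Set Implicit Arguments. Unset Strict Implicit. Unset Printing Implicit Defensive.
Import Order.TTheory GRing.Theory Num.Theory.
Local Open Scope ring_scope.

(* Ground set V = [n] is 'I_n; subsets are {set 'I_n}; vectors indexed by
   subsets are functions {set 'I_n} -> R (only values on the relevant
   index family matter). *)

Definition Pt (n t : nat) : {set {set 'I_n}} := [set I : {set 'I_n} | #|I| <= t]%N.

Definition psd {R : realFieldType} {n : nat} (T : {set {set 'I_n}})
  (M : {set 'I_n} -> {set 'I_n} -> R) : Prop :=
  forall v : {set 'I_n} -> R,
    0 <= \sum_(I in T) \sum_(J in T) v I * M I J * v J.

Definition momMx {R : realFieldType} {n : nat} (y : {set 'I_n} -> R) :
  {set 'I_n} -> {set 'I_n} -> R := fun I J => y (I :|: J).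

Definition gstar {R : realFieldType} {n : nat} (b : R) (a : 'I_n -> R)
  (y : {set 'I_n} -> R) : {set 'I_n} -> R :=
  fun I => b * y I + \sum_(j : 'I_n) a j * y (I :|: [set j]).

(* y in La^t(K), K = {x in [0,1]^n : b l + sum_j a l j x_j >= 0, l < m} *)
Definition inLasserre {R : realFieldType} {n m : nat} (t : nat)
  (b : 'I_m -> R) (a : 'I_m -> 'I_n -> R) (y : {set 'I_n} -> R) : Prop :=
  [/\ forall I, I \in Pt n (2 * t) -> 0 <= y I <= 1,
      y set0 = 1,
      psd (Pt n t) (momMx y)
    & forall l : 'I_m, psd (Pt n (t - 1)) (momMx (gstar (b l) (a l) y))].

Definition yext {R : realFieldType} {n : nat} (t : nat) (y : {set 'I_n} -> R) :
  {set 'I_n} -> R := fun I => if (#|I| <= 2 * t)%N then y I else 0.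

Definition zvec {R : realFieldType} {n : nat} (t : nat) (y : {set 'I_n} -> R)
  (S X : {set 'I_n}) : {set 'I_n} -> R :=
  fun I => \sum_(J in powerset S | X \subset J)
             (-1) ^+ #|J :\: X| * yext t y (I :|: J).

From HB Require Import structures.
From mathcomp Require Import all_boot all_order all_algebra zify.
Import Order.TTheory GRing.Theory Num.Theory.
Local Open Scope ring_scope.

(* For |I1|, |I2| <= t - k, let v_I1 be the vector putting weight
   (-1)^|J\X| on I1 u J for every X <= J <= S with |J| < k.  Every index of
   v_I1 lies in P_t(V), and v_I1^T M_t(y) v_I2 = z^X_(I1 u I2): expanding the
   product gives a double signed sum over J, J', which collapses to the single
   signed sum defining z^X because the terms dropped by the truncation |J| < k
   are exactly those where y' vanishes.  Hence z^X_0 = v_0^T M v_0 >= 0, and if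
   it is 0 then v_0 lies in the kernel of the PSD form, so z^X_I1 = 0, so v_I1
   is in the kernel too, and z^X_(I1 u I2) = 0; every I with |I| <= 2t - 2k is
   such a union. *)

Section QuadraticForm.
Variables (R : realFieldType) (n : nat).
Variables (T : {set {set 'I_n}}) (M : {set 'I_n} -> {set 'I_n} -> R).
Implicit Types (u w z : {set 'I_n} -> R) (al be : R).

Definition qform u w : R := \sum_(A in T) \sum_(B in T) u A * M A B * w B.

Lemma qform_combl al be u w z :
  qform (fun A => al * u A + be * w A) z = al * qform u z + be * qform w z.
Proof.
rewrite /qform !mulr_sumr -big_split; apply: eq_bigr => A _.
rewrite !mulr_sumr -big_split; apply: eq_bigr => B _.
by rewrite !mulrDl !mulrA.
Qed.

Hypothesis M_sym : forall A B, M A B = M B A.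

Lemma qformC u w : qform u w = qform w u.
Proof.
rewrite /qform exchange_big; apply: eq_bigr => A _; apply: eq_bigr => B _.
by rewrite M_sym mulrC [u B * _]mulrC mulrA.
Qed.

Lemma qform_combr al be u w z :
  qform z (fun A => al * u A + be * w A) = al * qform z u + be * qform z w.
Proof. by rewrite qformC qform_combl !(qformC z). Qed.

Lemma psd_qform_eq0 u w : psd T M -> qform u u = 0 -> qform u w = 0.
Proof.
move=> M_psd uu0; apply/eqP; apply: contraT => uw_neq0.
have uw2_neq0 : qform u w + qform u w != 0 by rewrite -mulr2n mulrn_eq0.
(* the direction mu u + w with this mu has quadratic value -1 *)
pose mu := - (qform w w + 1) / (qform u w + qform u w).
have := M_psd (fun A => mu * u A + 1 * w A).
rewrite -/(qform _ _) qform_combl !qform_combr uu0 (qformC w u).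
rewrite mulr0 add0r !mul1r addrA -mulrDr /mu divfK //.
by rewrite opprD addrAC addNr add0r oppr_ge0 ler10.
Qed.

End QuadraticForm.
Arguments qform {R n}.
Arguments psd_qform_eq0 {R n T M} M_sym {u} w.

Section SignedSums.
Variables (R : realFieldType) (n : nat).
Implicit Types (A B J X S : {set 'I_n}) (i : 'I_n).

Definition subset_sign X J : R := (-1) ^+ #|J :\: X|.

Definition toggle i A : {set 'I_n} := if i \in A then A :\ i else i |: A.

Lemma in_toggle i A z : z != i -> (z \in toggle i A) = (z \in A).
Proof. by move=> zi; rewrite /toggle; case: ifP; rewrite !inE (negbTE zi). Qed.

Lemma in_toggle_self i A : (i \in toggle i A) = (i \notin A).
Proof. by rewrite /toggle; case: ifP => iA; rewrite !inE ?eqxx ?iA. Qed.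

Lemma toggleK i : involutive (toggle i).
Proof.
move=> A; apply/setP => z; case: (eqVneq z i) => [->|zi].
  by rewrite !in_toggle_self negbK.
by rewrite !in_toggle.
Qed.

Lemma toggle_subl i A B : i \in B -> (toggle i A \subset B) = (A \subset B).
Proof.
move=> iB; apply/subsetP/subsetP => sub z; case: (eqVneq z i) => [->//|zi];
  by move: (sub z); rewrite in_toggle.
Qed.

Lemma toggle_subr i A B : i \notin B -> (B \subset toggle i A) = (B \subset A).
Proof.
move=> iB; apply/subsetP/subsetP => sub z zB;
  have zi : z != i by apply: contraNneq iB => <-.
  by move: (sub z zB); rewrite in_toggle.
by rewrite in_toggle // sub.
Qed.

Lemma subset_sign_toggle X i A :
  i \notin X -> subset_sign X (toggle i A) = - subset_sign X A.
Proof.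
move=> iX; rewrite /subset_sign (cardsD1 i (A :\: X)) (cardsD1 i (toggle i A :\: X)).
have -> : (toggle i A :\: X) :\ i = (A :\: X) :\ i.
  by apply/setP => z; rewrite !inE; case: (eqVneq z i) => //= zi; rewrite in_toggle.
rewrite !inE in_toggle_self (negbTE iX) /=.
by case: (i \in A); rewrite /= ?add0n ?add1n exprS mulN1r ?opprK.
Qed.

(* Toggling an element of J \ X is a sign-reversing involution on the
   summation range that fixes J u J'. *)
Lemma signed_sum_setU_eq0 S X J (G : {set 'I_n} -> R) :
  J \subset S -> X \proper J ->
  \sum_(J' in powerset S | X \subset J') subset_sign X J' * G (J :|: J') = 0.
Proof.
move=> JS /properP[XJ [i iJ iX]].
have iS : i \in S by apply: (subsetP JS).
set s := \sum_(_ in _ | _) _.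
have s_opp : s = - s.
  rewrite {1}/s (reindex_inj (inv_inj (toggleK i))) /= /s -sumrN.
  apply: eq_big => [J'|J' _]; first by rewrite !powersetE toggle_subl // toggle_subr.
  rewrite subset_sign_toggle // mulNr; congr (- (_ * G _)).
  apply/setP => z; rewrite !inE; case: (eqVneq z i) => [->|zi]; first by rewrite iJ.
  by rewrite in_toggle.
by move/eqP: s_opp; rewrite -addr_eq0 -mulr2n mulrn_eq0 => /eqP.
Qed.

Lemma signed_double_sum_setU S X (G : {set 'I_n} -> R) : X \subset S ->
  \sum_(J in powerset S | X \subset J) subset_sign X J *
     \sum_(J' in powerset S | X \subset J') subset_sign X J' * G (J :|: J')
  = \sum_(J' in powerset S | X \subset J') subset_sign X J' * G J'.
Proof.
move=> XS; rewrite (bigD1 X) /=; last by rewrite powersetE XS subxx.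
rewrite [X in _ + X]big1 ?addr0.
  rewrite /subset_sign setDv cards0 expr0 mul1r.
  by apply: eq_bigr => J' /andP[_ XJ']; rewrite (setUidPr XJ').
move=> J /andP[/andP[JS XJ] JX]; rewrite powersetE in JS.
by rewrite signed_sum_setU_eq0 ?mulr0 // properEneq eq_sym JX.
Qed.

End SignedSums.
Arguments subset_sign {R n}.
Arguments signed_double_sum_setU {R n S X}.

Lemma cover_by_two_small_subsets {T : finType} {I : {set T}} {s : nat} :
  (#|I| <= 2 * s)%N ->
  exists I1 I2 : {set T}, [/\ (#|I1| <= s)%N, (#|I2| <= s)%N & I1 :|: I2 = I].
Proof.
move=> I_small.
have /card_geqP[r [r_uniq r_size rI]] := geq_minl #|I| s.
pose I1 := [set x in r].
have I1I : I1 \subset I by apply/subsetP => x; rewrite inE => /rI.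
have cardI1 : #|I1| = minn #|I| s by rewrite cardsE -r_size; apply/card_uniqP.
exists I1, (I :\: I1); split; first by rewrite cardI1 geq_minr.
  by rewrite cardsDS // cardI1; lia.
by rewrite -{1}(setIidPr I1I) setID.
Qed.

Section SignedVectors.
Variables (R : realFieldType) (n t k : nat) (y : {set 'I_n} -> R).
Variables (S X : {set 'I_n}).
Hypotheses (k_lt_t : (k < t)%N) (XS : X \subset S).
Hypothesis y_vanish :
  forall I, I \in Pt n (2 * t) -> (k <= #|I :&: S|)%N -> y I = 0.
Implicit Types (A I J : {set 'I_n}).

Definition trunc_sign J : R := if (#|J| < k)%N then subset_sign X J else 0.

Definition signed_vec I1 A : R :=
  \sum_(J in powerset S | X \subset J) trunc_sign J * (A == I1 :|: J)%:R.

Lemma yext_vanish I {J} : J \subset S -> (k <= #|J|)%N -> yext t y (I :|: J) = 0.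
Proof.
move=> JS kJ; rewrite /yext; case: ifP => // IJ_small.
apply: y_vanish; first by rewrite inE.
by apply: leq_trans kJ (subset_leq_card _); rewrite subsetI subsetUr JS.
Qed.

Lemma setU_in_Pt {I J} : (#|I| <= t - k)%N -> (#|J| < k)%N -> I :|: J \in Pt n t.
Proof. by rewrite inE => *; apply: leq_trans (leq_card_setU I J) _; lia. Qed.

Lemma sum_signed_vec I1 (g : {set 'I_n} -> R) : (#|I1| <= t - k)%N ->
  \sum_(A in Pt n t) signed_vec I1 A * g A
    = \sum_(J in powerset S | X \subset J) trunc_sign J * g (I1 :|: J).
Proof.
move=> I1_small; under eq_bigr do rewrite /signed_vec mulr_suml.
rewrite exchange_big; apply: eq_bigr => J /andP[JS _].
rewrite /trunc_sign; case: ifP => J_small; last first.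
  by rewrite mul0r big1 // => A _; rewrite !mul0r.
rewrite (bigD1 (I1 :|: J)) ?setU_in_Pt //= eqxx mulr1 [X in _ + X]big1 ?addr0 //.
by move=> A /andP[_ /negbTE->]; rewrite mulr0 mul0r.
Qed.

Lemma qform_signed_vec_double_sum I1 I2 :
  (#|I1| <= t - k)%N -> (#|I2| <= t - k)%N ->
  qform (Pt n t) (momMx y) (signed_vec I1) (signed_vec I2)
    = \sum_(J' in powerset S | X \subset J') trunc_sign J' *
        \sum_(J in powerset S | X \subset J) trunc_sign J * y ((I1 :|: J) :|: (I2 :|: J')).
Proof.
move=> I1_small I2_small.
transitivity (\sum_(A in Pt n t) signed_vec I1 A *
    \sum_(B in Pt n t) signed_vec I2 B * y (A :|: B)).
  apply: eq_bigr => A _; rewrite mulr_sumr; apply: eq_bigr => B _.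
  by rewrite /momMx -mulrA [_ * signed_vec I2 B]mulrC.
under eq_bigr do rewrite sum_signed_vec // mulr_sumr.
rewrite exchange_big; apply: eq_bigr => J' _.
under eq_bigr do rewrite mulrCA.
by rewrite -mulr_sumr sum_signed_vec.
Qed.

Lemma qform_signed_vec I1 I2 : (#|I1| <= t - k)%N -> (#|I2| <= t - k)%N ->
  qform (Pt n t) (momMx y) (signed_vec I1) (signed_vec I2) = zvec t y S X (I1 :|: I2).
Proof.
move=> I1_small I2_small; rewrite qform_signed_vec_double_sum // /zvec.
rewrite -(signed_double_sum_setU (fun L => yext t y ((I1 :|: I2) :|: L)) XS).
apply: eq_bigr => J' /andP[J'S _]; rewrite powersetE in J'S.
rewrite !mulr_sumr; apply: eq_bigr => J /andP[JS _]; rewrite powersetE in JS.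
have J'JS : J' :|: J \subset S by rewrite subUset J'S JS.
have [/andP[J_small J'_small]|not_small] := boolP ((#|J| < k) && (#|J'| < k))%N.
  rewrite /trunc_sign J_small J'_small [J' :|: J]setUC [in RHS]setUACA.
  rewrite /yext ifT //; apply: leq_trans (leq_card_setU _ _) _.
  have := setU_in_Pt I1_small J_small; have := setU_in_Pt I2_small J'_small.
  by rewrite !inE; lia.
have k_le_J'J : (k <= #|J' :|: J|)%N.
  by move: not_small; rewrite negb_and -!leqNgt => /orP[] /leq_trans->;
    rewrite // subset_leq_card // ?subsetUr ?subsetUl.
rewrite (yext_vanish _ J'JS k_le_J'J) !mulr0.
by move: not_small; rewrite /trunc_sign negb_and => /orP[] /negbTE->; rewrite ?mul0r ?mulr0.
Qed.

Hypothesis y_psd : psd (Pt n t) (momMx y).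

Let momMx_sym A B : momMx y A B = momMx y B A.
Proof. by rewrite /momMx setUC. Qed.

Let set0_small : (#|@set0 'I_n| <= t - k)%N.
Proof. by rewrite cards0. Qed.

Lemma zvec_set0_ge0 : 0 <= zvec t y S X set0.
Proof. by rewrite -[set0]setU0 -qform_signed_vec //; apply: y_psd. Qed.

Lemma zvec_eq0 I : zvec t y S X set0 = 0 ->
  (#|I| <= 2 * t - 2 * k)%N -> zvec t y S X I = 0.
Proof.
move=> z0 I_small; rewrite -mulnBr in I_small.
have [I1 [I2 [I1_small I2_small <-]]] := cover_by_two_small_subsets I_small.
have v0_ker : qform (Pt n t) (momMx y) (signed_vec set0) (signed_vec set0) = 0.
  by rewrite qform_signed_vec // setU0.
have := psd_qform_eq0 momMx_sym (signed_vec I1) y_psd v0_ker.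
rewrite qform_signed_vec // set0U => zI1.
have vI1_ker : qform (Pt n t) (momMx y) (signed_vec I1) (signed_vec I1) = 0.
  by rewrite qform_signed_vec // setUid.
by have := psd_qform_eq0 momMx_sym (signed_vec I2) y_psd vI1_ker; rewrite qform_signed_vec.
Qed.

End SignedVectors.

Theorem mainTheorem8 (R : realFieldType) (n m : nat)
  (b : 'I_m -> R) (a : 'I_m -> 'I_n -> R) (t k : nat)
  (y : {set 'I_n} -> R) (S : {set 'I_n}) :
  (1 < t)%N -> (0 < k)%N -> (k < t)%N ->
  inLasserre t b a y ->
  (forall I : {set 'I_n}, I \in Pt n (2 * t) -> (k <= #|I :&: S|)%N -> y I = 0) ->
  forall X : {set 'I_n}, X \subset S ->
    0 <= zvec t y S X set0 /\
    (zvec t y S X set0 = 0 ->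
       forall I : {set 'I_n}, (#|I| <= 2 * t - 2 * k)%N -> zvec t y S X I = 0).
Proof.
move=> _ _ k_lt_t [_ _ y_psd _] y_vanish X XS; split.
  exact: zvec_set0_ge0 k_lt_t XS y_vanish y_psd.
by move=> z0 I; apply: zvec_eq0 k_lt_t XS y_vanish y_psd I z0.
Qed.
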